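(* Let $p$ be a prime, and let $\alpha=(\ell_1,\dots,\ell_m)$ and $\tau=(k_1,\dots,k_n)$ be types with $\alpha\le\tau$. For $1\le j\le n$ let $f^\tau_\alpha(j)=\max\{i\in\{0,1,\dots,m\}\colon i=0\text{ or }\ell_i\ge k_j\}$, and let $u^\tau_\alpha=\max\{j-f^\tau_\alpha(j)\colon 1\le j\le n\}$. Then $$\min\{\mathrm{rk}(A(\tau)/N)\colon N\le A(\tau),\ \gamma(N)=\alpha\}=u^\tau_\alpha.$$
   Context: A type is a tuple of integers $(k_1,\dots,k_n)$ with $k_1\ge\cdots\ge k_n\ge1$; $A(\tau)=\prod_{i=1}^n\mathbb{Z}/p^{k_i}\mathbb{Z}$. For a finite abelian $p$-group $G$, $\gamma(G)$ is its type (the unique type $\tau$ with $G\cong A(\tau)$), and $\mathrm{rk}(G)$ is the minimal number of generators of $G$. For tuples $\eta=(\ell_1,\dots,\ell_m)$, $\tau=(k_1,\dots,k_n)$, $\eta\le\tau$ means $m\le n$ and $\ell_i\le k_i$ for all $i\le m$. *)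

From mathcomp Require Import all_boot all_order all_fingroup all_solvable.
Set Implicit Arguments. Unset Strict Implicit. Unset Printing Implicit Defensive.

Definition is_type (t : seq nat) : bool := sorted geq t && all (fun k => 0 < k) t.

Definition type_le (eta tau : seq nat) : bool :=
  (size eta <= size tau) &&
  [forall i : 'I_(size eta), nth 0 eta i <= nth 0 tau i].

(* A finite abelian p-group G has type tau (gamma(G) = tau), i.e. G is
   isomorphic to A(tau) = prod_i Z/p^{k_i}: stated via the library's
   abelian_type (orders of the cyclic factors in decreasing order). *)
Definition has_type (p : nat) (gT : finGroupType) (G : {set gT}) (tau : seq nat) :=
  abelian G /\ abelian_type G = [seq p ^ k | k <- tau].

Definition rk (gT : finGroupType) (G : {set gT}) : nat :=
  \big[minn/#|G|]_(X : {set gT} | (<<X>> == G)%g) #|X|.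

Definition ffun_ta (alpha tau : seq nat) (j : nat) : nat :=
  \max_(i < (size alpha).+1 | (val i == 0%N) || (nth 0 tau j.-1 <= nth 0 alpha i.-1)) i.

(* u^tau_alpha = max { j - f(j) : 1 <= j <= n } (the true maximum is >= n - m >= 0,
   so truncated subtraction does not change its value). *)
Definition u_ta (alpha tau : seq nat) : nat :=
  \max_(1 <= j < (size tau).+1) (j - ffun_ta alpha tau j).

From mathcomp Require Import all_boot all_order all_fingroup all_solvable.
From mathcomp Require Import zify.
Set Implicit Arguments. Unset Strict Implicit. Unset Printing Implicit Defensive.
Import GroupScope.

(* Lower bound: for s = k_j - 1 the p^s-th power map sends G/N onto
   Mho^s(G)/Mho^s(N), whose p-rank is at least #{i | k_i >= k_j} - #{i | l_i >= k_j},
   i.e. at least j - f(j).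
   Upper bound: write G = <b_1> x ... x <b_n> with #[b_j] = p^(k_j) and let N be
   generated by the y_i = b_i^(p^(k_i - l_i)) b_(u+i). Since #[b_(u+i)] <= p^(l_i), the
   y_i generate a direct product of cyclic groups of orders p^(l_i) (the matrix of
   exponents is triangular), and modulo N each b_j with j > u is a power of b_(j-u),
   so the images of b_1, ..., b_u generate G/N. *)

Lemma bigminn_le_seq (I : eqType) (r : seq I) (P : pred I) (F : I -> nat) x i0 :
  i0 \in r -> P i0 -> \big[minn/x]_(i <- r | P i) F i <= F i0.
Proof.
elim: r => // h t IH; rewrite inE big_cons => /predU1P[<- Pi|it Pi].
  by rewrite Pi geq_minl.
case: ifP => _; last exact: IH.
by rewrite (leq_trans (geq_minr _ _)) ?IH.
Qed.

Lemma rk_grank (gT : finGroupType) (H : {group gT}) : rk H = 'm(H).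
Proof.
rewrite /rk; apply/eqP; rewrite eqn_leq; apply/andP; split.
  have [B genB <-] := grank_witness H.
  by rewrite (bigminn_le_seq _ _ (mem_index_enum B)) // genB eqxx.
elim/big_ind: _ => [|a b Ha Hb|X /eqP genX]; first by have := grank_min H; rewrite genGid.
  by rewrite leq_min Ha Hb.
by rewrite -genX grank_min.
Qed.

Lemma sorted_geq_nth (s : seq nat) i j :
  sorted geq s -> i <= j < size s -> nth 0 s j <= nth 0 s i.
Proof.
move=> ss /andP[ij js].
apply: (sorted_leq_nth (rev_trans leq_trans) leqnn 0 ss) => //.
by rewrite inE (leq_ltn_trans ij).
Qed.

Lemma ltn_count_sorted_geq (s : seq nat) c i : sorted geq s ->
  (i < count (leq c) s) = (i < size s) && (c <= nth 0 s i).
Proof.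
elim: s i => [|x s IH] i //= ss.
have le_head k : nth 0 (x :: s) k <= x.
  have [ks|ks] := ltnP k (size (x :: s)); last by rewrite nth_default.
  exact: (@sorted_geq_nth (x :: s) 0 k ss ks).
have {}IH := IH _ (path_sorted ss).
case: (leqP c x) => cx /=.
  by case: i => [|i] //=; rewrite add1n ltnS IH.
have lt_c k : c <= nth 0 (x :: s) k = false by rewrite leqNgt (leq_ltn_trans (le_head k)).
by rewrite add0n IH; have /= -> := lt_c i.+1; rewrite lt_c !andbF.
Qed.

Lemma leq_count_sorted_geq (s : seq nat) j : sorted geq s -> 0 < j <= size s ->
  j <= count (leq (nth 0 s j.-1)) s.
Proof.
move=> ss /andP[j0 js]; have := ltn_count_sorted_geq (nth 0 s j.-1) j.-1 ss.
by rewrite leqnn andbT prednK // js.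
Qed.

Lemma count_le_ffun_ta (alpha tau : seq nat) j : sorted geq alpha ->
  count (leq (nth 0 tau j.-1)) alpha <= ffun_ta alpha tau j.
Proof.
move=> sa; set r := count _ _.
have [->|r0] := posnP r; first by [].
have rm : r < (size alpha).+1 by rewrite ltnS count_size.
apply: (bigmax_sup (Ordinal rm)) => //=.
have := ltn_count_sorted_geq (nth 0 tau j.-1) r.-1 sa.
by rewrite prednK // leqnn => /esym/andP[_ ->]; rewrite orbT.
Qed.

Lemma tau_le_alpha_shift (alpha tau : seq nat) j : sorted geq alpha ->
  u_ta alpha tau <= j < size tau ->
  j - u_ta alpha tau < size alpha /\ nth 0 tau j <= nth 0 alpha (j - u_ta alpha tau).
Proof.
move=> sa /andP[uj jn]; set u := u_ta alpha tau in uj *.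
have : j.+1 - ffun_ta alpha tau j.+1 <= u.
  by apply: (leq_bigmax_seq j.+1); rewrite // mem_index_iota ltnS; lia.
rewrite /ffun_ta (bigmax_eq_arg ord0) //=.
case: arg_maxnP => //= i /orP[/eqP->|Pi] _ le_u; first by lia.
have im := ltn_ord i; have lt_m : j - u < size alpha by lia.
by split=> //; apply: leq_trans Pi _; apply: sorted_geq_nth => //; lia.
Qed.

Lemma gen_bigdprod_cycles (gT : finGroupType) (s : seq gT) (E : {group gT}) :
  \big[dprod/1]_(x <- s) <[x]> = E -> <<[set x in s]>> = E.
Proof.
move=> defE; rewrite -(bigdprodWY defE).
elim: s {E defE} => [|x s IH]; first by rewrite big_nil gen0.
by rewrite big_cons -joingE -joing_idr -IH joing_idl joing_idr set_cons.
Qed.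

Lemma mem_gen_nth (gT : finGroupType) (s : seq gT) k : nth 1 s k \in <<[set x in s]>>.
Proof.
have [ks|ks] := ltnP k (size s); last by rewrite nth_default ?group1.
by rewrite mem_gen // inE mem_nth.
Qed.

Lemma abelian_bigdprod_cycles (gT : finGroupType) (s : seq gT) (E : {group gT}) :
  \big[dprod/1]_(x <- s) <[x]> = E -> abelian E.
Proof.
move=> defE; apply/center_idP; rewrite -(center_bigdprod defE) -[RHS]defE.
by apply: eq_bigr => x _; apply/center_idP/cycle_abelian.
Qed.

Lemma pgroup_bigdprod_cycles p (gT : finGroupType) (s : seq gT) (E : {group gT}) t :
  prime p -> \big[dprod/1]_(x <- s) <[x]> = E -> map order s = map (expn p) t ->
  p.-group E.
Proof.
move=> pr defE os; rewrite /pgroup -(bigdprod_card defE) big_seq.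
elim/big_ind: _ => //= [x y px py|x xs]; first by rewrite pnatM px py.
change (p.-nat #[x]); have := map_f order xs; rewrite os => /mapP[k _ ->].
by rewrite pnatX pnat_id.
Qed.

Lemma has_type_pgroup p (gT : finGroupType) (G : {group gT}) t :
  prime p -> has_type p G t -> p.-group G.
Proof.
move=> pr [cG tyG]; have [b defG ob] := abelian_structure cG.
by apply: pgroup_bigdprod_cycles pr defG _; rewrite ob tyG.
Qed.

Lemma has_type_bigdprod_cycles p (gT : finGroupType) (s : seq gT) (E : {group gT}) t :
  prime p -> is_type t -> \big[dprod/1]_(x <- s) <[x]> = E ->
  map order s = map (expn p) t -> has_type p E t.
Proof.
move=> pr /andP[st pt] defE os; split; first exact: abelian_bigdprod_cycles defE.
have s1 : 1 \notin s.
  apply/negP => s1; have := map_f order s1; rewrite os order1 => /mapP[k /(allP pt) k0].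
  by move/eqP; rewrite eq_sym -(expn0 p) eqn_exp2l ?prime_gt1 // eqn0Ngt k0.
apply: (@sorted_eq _ geq (rev_trans leq_trans)).
- by move=> x y xy; apply: anti_leq; rewrite andbC.
- exact: abelian_type_sorted.
- by move: st; apply: homo_sorted => x y; apply: leq_pexp2l (prime_gt0 pr).
- by rewrite -os; apply: abelian_type_pgroup (pgroup_bigdprod_cycles pr defE os) defE s1.
Qed.

Lemma p_rank_Mho_bigdprod_cycles p s (gT : finGroupType) (b : seq gT) (H : {group gT}) t :
  prime p -> \big[dprod/1]_(x <- b) <[x]> = H -> map order b = map (expn p) t ->
  'r_p('Mho^s(H)) = count (leq s.+1) t.
Proof.
move=> pr; elim: b H t => [|x b IH] H [|k t] //=.
- by rewrite big_nil => <- _; rewrite Mho1 p_rank1.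
rewrite big_cons => defH [ox ob].
case/dprodP: (defH) => [[_ H' _ defH']] _ _ _; rewrite defH' in defH.
rewrite -(p_rank_dprod p (Mho_dprod s defH)) (IH _ _ defH' ob); congr (_ + _).
have px : p.-elt x by rewrite /p_elt ox pnatX pnat_id.
rewrite /= (Mho_p_cycle s px) -rank_pgroup ?rank_cycle; last exact: p_eltX.
by rewrite -order_dvdn ox dvdn_Pexp2l ?prime_gt1 // ltnNge.
Qed.

Lemma p_rank_Mho_type p s (gT : finGroupType) (G : {group gT}) t :
  prime p -> has_type p G t -> 'r_p('Mho^s(G)) = count (leq s.+1) t.
Proof.
move=> pr [cG tyG]; have [b defG ob] := abelian_structure cG.
by apply: p_rank_Mho_bigdprod_cycles pr defG _; rewrite ob tyG.
Qed.

Lemma morphic_expgn_abelian (gT : finGroupType) (G : {group gT}) n :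
  abelian G -> morphic G (expgn^~ n).
Proof.
by move=> cG; apply/morphicP => x y Gx Gy; rewrite expgMn //; apply: (centsP cG).
Qed.

Lemma p_rank_Mho_sub_le_rank_quotient (p s : nat) (gT : finGroupType) (G N : {group gT}) :
  abelian G -> p.-group G -> N \subset G ->
  'r_p('Mho^s(G)) - 'r_p('Mho^s(N)) <= 'r(G / N).
Proof.
move=> cG pG sNG; have cN := abelianS sNG cG; have pN := pgroupS sNG pG.
have nsNG : N <| G by rewrite -sub_abelian_normal.
have nMM : 'Mho^s(G) \subset 'N('Mho^s(N)).
  apply/cents_norm/(sub_abelian_cent2 cG); first exact: Mho_sub.
  exact: subset_trans (Mho_sub _ _) sNG.
apply: leq_trans (p_rank_quotient p nMM) _; apply: leq_trans (p_rank_le_rank p _) _.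
pose phi := morphm_morphism (morphic_expgn_abelian (p ^ s) cG).
have phiG : phi @* G = 'Mho^s(G) by rewrite morphimEdom (MhoEabelian s pG cG).
have phiN : phi @* N = 'Mho^s(N).
  by rewrite morphimE (setIidPr sNG) (MhoEabelian s pN cN).
have := morphim_rank_abelian (quotm phi nsNG) (quotient_abelian N cG).
by rewrite morphim_quotm phiG phiN.
Qed.

Lemma u_ta_le_rank_quotient p (alpha tau : seq nat) (gT : finGroupType) (G N : {group gT}) :
  prime p -> is_type alpha -> is_type tau -> has_type p G tau ->
  N \subset G -> has_type p N alpha -> u_ta alpha tau <= 'r(G / N).
Proof.
move=> pr /andP[sa _] /andP[st pt] tyG sNG tyN.
have [cG _] := tyG; have pG := has_type_pgroup pr tyG.
apply/bigmax_leqP_seq => j; rewrite mem_index_iota => /andP[j1 jn] _.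
set c := nth 0 tau j.-1.
have c0 : 0 < c by apply: (allP pt); rewrite mem_nth // -ltnS prednK.
apply: leq_trans (p_rank_Mho_sub_le_rank_quotient c.-1 cG pG sNG).
rewrite (p_rank_Mho_type _ pr tyG) (p_rank_Mho_type _ pr tyN) prednK //.
apply: leq_sub; first by apply: leq_count_sorted_geq; rewrite // j1 -ltnS.
exact: count_le_ffun_ta.
Qed.

Lemma bigdprod_cycles_triangular (gT : finGroupType) (es ys : seq gT) (E : {group gT})
    (w z : nat -> gT) :
  abelian E -> \big[dprod/1]_(x <- es) <[x]> = E -> size ys <= size es ->
  (forall i, i < size ys -> [/\ nth 1 ys i = w i * z i, w i \in <[nth 1 es i]>,
     z i \in <<[set x in drop i.+1 es]>> & #[z i] %| #[w i]]) ->
  exists2 H : {group gT}, \big[dprod/1]_(y <- ys) <[y]> = H &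
    H \subset E /\ forall i, i < size ys -> #[nth 1 ys i] = #[w i].
Proof.
elim: es ys E w z => [|x es IH] [|y ys] E w z cE defE //= le_size hyp;
  try by exists 1%G; rewrite ?big_nil; split; rewrite ?sub1G.
rewrite big_cons in defE; case/dprodP: (defE) => [[_ E' _ defE']].
rewrite defE' in defE * => mulE _ tiE.
have sE'E : E' \subset E by rewrite -mulE mulG_subr.
have [H' defH' [sH'E' oH']] := IH ys E' (w \o S) (z \o S) (abelianS sE'E cE) defE'
  le_size (fun i lt => hyp i.+1 lt).
have /= [y_wz wx zE' dv_zw] := hyp 0 erefl.
rewrite drop0 (gen_bigdprod_cycles defE') in zE'.
have xE : x \in E by rewrite -mulE -[x in x \in _]mulg1 mem_mulg ?cycle_id ?group1.
have zE : z 0 \in E := subsetP sE'E _ zE'.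
have wE : w 0 \in E by apply: subsetP wx; rewrite cycle_subG.
have y_wzX t : y ^+ t = w 0 ^+ t * z 0 ^+ t.
  by rewrite y_wz expgMn //; apply: (centsP cE).
have wX1 t : y ^+ t \in E' -> w 0 ^+ t = 1.
  move=> yE'; suff : w 0 ^+ t \in <[x]> :&: E' by rewrite tiE => /set1P.
  rewrite inE groupX //= -(mulgK (z 0 ^+ t) (w 0 ^+ t)) -y_wzX.
  by rewrite groupM // groupV groupX.
have yX1 t : w 0 ^+ t = 1 -> y ^+ t = 1.
  move=> wt; rewrite y_wzX wt mul1g; apply/eqP; rewrite -order_dvdn.
  by apply: dvdn_trans dv_zw _; rewrite order_dvdn wt.
have oy : #[y] = #[w 0].
  have wy1 : w 0 ^+ #[y] = 1 by apply: wX1; rewrite expg_order group1.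
  have yw1 : y ^+ #[w 0] = 1 by apply: yX1; rewrite expg_order.
  by apply/eqP; rewrite eqn_dvd !order_dvdn wy1 yw1 eqxx.
have yE : y \in E by rewrite y_wz groupM.
have tiyH' : <[y]> :&: H' = 1.
  apply/trivgP/subsetP => v /setIP[/cycleP[t ->] H'v].
  by rewrite yX1 ?set11 // wX1 // (subsetP sH'E').
have cyH' : H' \subset 'C(<[y]>).
  by apply: (sub_abelian_cent2 cE); rewrite ?cycle_subG // (subset_trans sH'E').
exists (<[y]> <*> H')%G; first by rewrite big_cons defH' dprodEY.
split; first by rewrite join_subG cycle_subG yE (subset_trans sH'E').
by case=> [|i] //= lt; rewrite oH'.
Qed.

Lemma subset_gen_take (gT : finGroupType) (s : seq gT) k :
  (forall j, k <= j < size s -> nth 1 s j \in <<[set x in take j s]>>) ->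
  {subset s <= <<[set x in take k s]>>}.
Proof.
move=> hyp; have prefix j : j <= k -> <<[set x in take j s]>> \subset <<[set x in take k s]>>.
  by move=> jk; apply/genS/subsetP => x; rewrite !inE -(take_takel s jk); apply: mem_take.
suff take_sub j : j <= size s -> <<[set x in take j s]>> \subset <<[set x in take k s]>>.
  by move=> x xs; apply: subsetP (take_sub _ (leqnn _)) _ _; rewrite take_size mem_gen ?inE.
elim: j => [|j IH] js; first exact: prefix.
have [jk|kj] := ltnP j k; first exact: prefix.
have /subsetP sub := IH (ltnW js).
rewrite (take_nth 1 js) gen_subG; apply/subsetP => x; rewrite inE mem_rcons inE.
by case/predU1P=> [->|xt]; apply: sub; rewrite ?hyp ?kj // mem_gen ?inE.
Qed.

Section Construction.

Variables (p : nat) (alpha tau : seq nat) (gT : finGroupType) (G : {group gT}) (b : seq gT).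
Hypotheses (pr : prime p) (alpha_type : is_type alpha) (le_alpha_tau : type_le alpha tau).
Hypotheses (cG : abelian G) (defG : \big[dprod/1]_(x <- b) <[x]> = G).
Hypothesis order_b : map order b = map (expn p) tau.

Local Notation u := (u_ta alpha tau).
Let w i := nth 1 b i ^+ (p ^ (nth 0 tau i - nth 0 alpha i)).
(* For u = 0 we have alpha = tau and N = G; [nth 1 b (u + i)] is 1 past the end of [b]. *)
Let z i := if 0 < u then nth 1 b (u + i) else 1.
Let ys := mkseq (fun i => w i * z i) (size alpha).
Let N := <<[set x in ys]>>%G.

Let sorted_alpha : sorted geq alpha. Proof. by case/andP: alpha_type. Qed.

Let size_b : size b = size tau.
Proof. by rewrite -(size_map order) order_b size_map. Qed.

Let order_nth_b j : j < size tau -> #[nth 1 b j] = (p ^ nth 0 tau j)%N.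
Proof.
move=> jn; have := congr1 (nth 0 ^~ j) order_b.
by rewrite (nth_map 1) ?size_b // (nth_map 0).
Qed.

Let mem_nth_b j : nth 1 b j \in G.
Proof. by rewrite -(gen_bigdprod_cycles defG) mem_gen_nth. Qed.

Let size_alpha : size alpha <= size tau.
Proof. by case/andP: le_alpha_tau. Qed.

Let le_nth_alpha i : i < size alpha -> nth 0 alpha i <= nth 0 tau i.
Proof. by move=> im; case/andP: le_alpha_tau => _ /forallP/(_ (Ordinal im)). Qed.

Let order_w i : i < size alpha -> #[w i] = (p ^ nth 0 alpha i)%N.
Proof.
move=> im; rewrite /w (orderXexp _ (order_nth_b _)) ?subKn ?le_nth_alpha //.
exact: leq_trans im size_alpha.
Qed.

Let order_z_dvd i : i < size alpha -> #[z i] %| #[w i].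
Proof.
move=> im; rewrite order_w // /z; case: posnP => [_|_]; first by rewrite order1 dvd1n.
have [uin|uin] := ltnP (u + i) (size tau); last first.
  by rewrite nth_default ?size_b // order1 dvd1n.
have /tau_le_alpha_shift[//|_] : u <= u + i < size tau by rewrite leq_addr.
by rewrite addKn order_nth_b // dvdn_Pexp2l ?prime_gt1.
Qed.

Let bigdprod_ys : \big[dprod/1]_(x <- ys) <[x]> = N /\ map order ys = map (expn p) alpha.
Proof.
have size_ys : size ys = size alpha by rewrite size_mkseq.
have [|i|H defH [_ oH]] := bigdprod_cycles_triangular (ys := ys) (w := w) (z := z) cG defG.
- by rewrite size_ys size_b.
- rewrite size_ys => im; rewrite nth_mkseq //; split=> //; last exact: order_z_dvd.
    by rewrite groupX ?cycle_id.
  rewrite /z; case: posnP => u_pos; rewrite ?group1 //.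
  have le_i : i.+1 <= u + i by rewrite addnC -addn1 leq_add2l.
  by rewrite -(subnKC le_i) -nth_drop mem_gen_nth.
have -> : N = H by apply: group_inj; rewrite /= (gen_bigdprod_cycles defH).
split=> //; apply: (@eq_from_nth _ 0); rewrite !size_map ?size_iota // => i im.
by rewrite (nth_map 1) ?size_ys // (nth_map 0) // oH ?size_ys // order_w.
Qed.

Let nth_ys_in_N i : i < size alpha -> w i * z i \in N.
Proof.
by move=> im; rewrite -(nth_mkseq 1 (fun i => w i * z i) im) mem_gen_nth.
Qed.

Let N_sub_G : N \subset G.
Proof.
rewrite gen_subG; apply/subsetP => y; rewrite inE => /mapP[i _ ->].
by rewrite groupM ?groupX // /z; case: ifP.
Qed.

Let nNG : G \subset 'N(N).
Proof. exact/cents_norm/(sub_abelian_cent2 cG). Qed.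

Let coset_b_prefix j : u <= j < size tau ->
  nth 1 (map (coset N) b) j \in <<[set x in take j (map (coset N) b)]>>.
Proof.
move=> ujn; have [im le_tau] := tau_le_alpha_shift sorted_alpha ujn.
have [uj jn] := andP ujn; have bN k : nth 1 b k \in 'N(N) := subsetP nNG _ (mem_nth_b k).
have yN := nth_ys_in_N im; rewrite /z in yN.
rewrite (nth_map 1) ?size_b //; case: posnP yN => [u0|u_pos] yN.
  suff /coset_id-> : nth 1 b j \in N by rewrite group1.
  move: yN; rewrite /w u0 !subn0 in le_tau *.
  have /eqP-> : nth 0 tau j - nth 0 alpha j == 0 by rewrite subn_eq0.
  by rewrite expn0 expg1 mulg1.
have lt_ju_j : j - u < j by rewrite ltn_subrL u_pos (leq_trans u_pos).
rewrite subnKC // in yN; move/coset_id: yN; rewrite morphM ?groupX // morphX //.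
move/(canRL (mulKg _)); rewrite mulg1 => ->; rewrite groupV groupX // mem_gen // inE.
have lt_ju_n : j - u < size tau := ltn_trans lt_ju_j jn.
apply/(nthP 1); exists (j - u); last by rewrite nth_take // (nth_map 1) ?size_b.
by rewrite size_take_min size_map size_b leq_min lt_ju_j.
Qed.

Let quotient_gen_take : G / N = <<[set x in take u (map (coset N) b)]>>.
Proof.
have /subset_gen_take sub_take : forall j, u <= j < size (map (coset N) b) ->
    nth 1 (map (coset N) b) j \in <<[set x in take j (map (coset N) b)]>>.
  by move=> j; rewrite size_map size_b; apply: coset_b_prefix.
have sbG : [set x in b] \subset G by rewrite -(gen_bigdprod_cycles defG) subset_gen.
apply/eqP; rewrite eqEsubset gen_subG; apply/andP; split.
  rewrite -[in G / N](gen_bigdprod_cycles defG) quotient_gen ?(subset_trans sbG) //.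
  rewrite gen_subG; apply/subsetP => _ /morphimP[x _ xb ->].
  by rewrite inE in xb; apply/sub_take/map_f.
apply/subsetP => y; rewrite inE => /mem_take/mapP[x xb ->].
by rewrite mem_quotient // (subsetP sbG) ?inE.
Qed.

Lemma exists_sub_has_type_grank_quotient_le :
  exists N : {group gT}, [/\ N \subset G, has_type p N alpha & 'm(G / N) <= u_ta alpha tau].
Proof.
have [defN order_ys] := bigdprod_ys.
exists N; split; first exact: N_sub_G; first exact: has_type_bigdprod_cycles defN order_ys.
rewrite quotient_gen_take (leq_trans (grank_min _)) // cardsE (leq_trans (card_size _)) //.
by rewrite size_take_min geq_minl.
Qed.

End Construction.

Theorem theorem3p2 (p : nat) (alpha tau : seq nat) (gT : finGroupType) (G : {group gT}) :
  prime p -> is_type alpha -> is_type tau -> type_le alpha tau ->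
  has_type p G tau ->
  (exists N : {group gT}, [/\ N \subset G, has_type p N alpha & rk (G / N)%g = u_ta alpha tau])
  /\ (forall N : {group gT}, N \subset G -> has_type p N alpha -> u_ta alpha tau <= rk (G / N)%g).
Proof.
move=> pr ta tt tle tyG; have [cG typeG] := tyG.
have lower (N : {group gT}) : N \subset G -> has_type p N alpha -> u_ta alpha tau <= rk (G / N).
  move=> sNG tyN; rewrite rk_grank grank_abelian ?quotient_abelian //.
  exact: u_ta_le_rank_quotient pr ta tt tyG sNG tyN.
split=> //; have [b defG order_b] := abelian_structure cG; rewrite typeG in order_b.
have [N [sNG tyN grank_le]] := exists_sub_has_type_grank_quotient_le pr ta tle cG defG order_b.
by exists N; split=> //; apply/eqP; rewrite eqn_leq lower // rk_grank grank_le.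
Qed.
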